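(* Let $k$ be a positive integer and let $D$ be a digraph with no isolated vertex. Then $\gamma_{trk}(D)\le (k+1)\gamma(D)$. Moreover, if $\gamma_{trk}(D)=(k+1)\gamma(D)$, then every $\gamma(D)$-set is a packing in $D$.
   Context: All digraphs are finite, with no loops or multiple arcs (pairs of opposite arcs are allowed). For a vertex $v$, $N^-(v)$ and $N^+(v)$ denote its sets of in-neighbors and out-neighbors, and $N^+[v]=N^+(v)\cup\{v\}$; for $X\subseteq V(D)$, $N^+[X]=\bigcup_{v\in X}N^+[v]$. A vertex is isolated if it has no in-neighbor and no out-neighbor. For a positive integer $k$, a $k$-rainbow dominating function ($k$RDF) on $D$ is a function $f:V(D)\to\mathcal P(\{1,\dots,k\})$ such that every vertex $v$ with $f(v)=\emptyset$ satisfies $\bigcup_{u\in N^-(v)}f(u)=\{1,\dots,k\}$. Its weight is $\omega(f)=\sum_{v\in V(D)}|f(v)|$. If $D$ has no isolated vertex, a total $k$-rainbow dominating function (T$k$RDF) on $D$ is a $k$RDF $f$ such that the subdigraph of $D$ induced by $\{v: f(v)\neq\emptyset\}$ has no isolated vertex; $\gamma_{trk}(D)$ is the minimum weight of a T$k$RDF on $D$. A set $S\subseteq V(D)$ is a dominating set if $N^+[S]=V(D)$; $\gamma(D)$ is the minimum size of a dominating set, and a dominating set of size $\gamma(D)$ is a $\gamma(D)$-set. A set $S$ is a packing if $N^+[u]\cap N^+[v]=\emptyset$ for all distinct $u,v\in S$. *)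

From mathcomp Require Import all_boot.
Set Implicit Arguments. Unset Strict Implicit. Unset Printing Implicit Defensive.

(* A digraph on a finite vertex type T is given by its arc relation a:
   [a u v] means there is an arc u -> v.
   Pairs of opposite arcs are allowed; multiple arcs do not exist. *)
Definition loopless (T : finType) (a : rel T) : Prop := forall v, ~~ a v v.

Section Digraph.
Variables (T : finType) (a : rel T).

Definition out_nb (v : T) : {set T} := [set u | a v u].
Definition in_nb (v : T) : {set T} := [set u | a u v].
Definition closed_out_nb (v : T) : {set T} := v |: out_nb v.
Definition closed_out_nbS (X : {set T}) : {set T} :=
  \bigcup_(v in X) closed_out_nb v.

Definition isolated (v : T) : bool := (in_nb v == set0) && (out_nb v == set0).
Definition no_isolated : Prop := forall v, ~~ isolated v.

(* Colours {1,...,k} are represented by 'I_k. *)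
Definition is_kRDF (k : nat) (f : {ffun T -> {set 'I_k}}) : bool :=
  [forall v, (f v == set0) ==> (\bigcup_(u in in_nb v) f u == [set: 'I_k])].

Definition weight (k : nat) (f : {ffun T -> {set 'I_k}}) : nat :=
  \sum_(v : T) #|f v|.

Definition support (k : nat) (f : {ffun T -> {set 'I_k}}) : {set T} :=
  [set v | f v != set0].

Definition induced_no_isolated (S : {set T}) : bool :=
  [forall v in S, exists u in S, a u v || a v u].

Definition is_TkRDF (k : nat) (f : {ffun T -> {set 'I_k}}) : bool :=
  is_kRDF f && induced_no_isolated (support f).

(* minimum weight of a TkRDF; the default (k*|V|).+1 exceeds every weight
   and is only reached if no TkRDF exists (impossible without isolated
   vertices: the constant function [set: 'I_k] is a TkRDF). *)
Definition gamma_trk (k : nat) : nat :=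
  \big[minn/(k * #|T|).+1]_(f : {ffun T -> {set 'I_k}} | is_TkRDF f) weight f.

Definition is_dominating (S : {set T}) : bool := closed_out_nbS S == [set: T].

(* [set: T] is always dominating, so the default #|T| is harmless. *)
Definition gamma : nat := \big[minn/#|T|]_(S : {set T} | is_dominating S) #|S|.

Definition is_gamma_set (S : {set T}) : bool := is_dominating S && (#|S| == gamma).

Definition is_packing (S : {set T}) : Prop :=
  forall u v, u \in S -> v \in S -> u != v ->
    [disjoint closed_out_nb u & closed_out_nb v].
End Digraph.

(* Let S be a minimum dominating set and B the vertices of S without a neighbour
   in S.  Give every vertex of S all k colours and give one colour to a chosen
   neighbour of each vertex of B: this is a total k-rainbow dominating function
   of weight at most k|S| + |B| <= (k+1)|S|.  If two vertices u, v of S have a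
   common closed out-neighbour x, then either one of them lies outside B, or
   both lie in B and x serves as the chosen neighbour of both; in either case
   the weight drops below (k+1)|S|. *)
From Pilot Require Import Defs.
From mathcomp Require Import all_boot.
Set Implicit Arguments. Unset Strict Implicit. Unset Printing Implicit Defensive.

Lemma bigmin_le (I : finType) (P : pred I) (F : I -> nat) x0 i :
  P i -> \big[minn/x0]_(j | P j) F j <= F i.
Proof.
rewrite unlock; have : i \in index_enum I by rewrite mem_index_enum.
elim: (index_enum I) => //= j r IH; rewrite inE => /orP [/eqP <- -> | /IH le_i /le_i].
  exact: geq_minl.
by case: (P j) => //; apply: leq_trans (geq_minr _ _).
Qed.

Section TotalRainbowDomination.
Variables (T : finType) (a : rel T) (k : nat).

Definition adjacent (u v : T) : bool := a u v || a v u.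

Lemma adjacent_sym u v : adjacent u v = adjacent v u.
Proof. by rewrite /adjacent orbC. Qed.

Definition isolated_in (S : {set T}) : {set T} :=
  [set v in S | [forall u in S, ~~ adjacent u v]].

Lemma isolated_in_sub (S : {set T}) : isolated_in S \subset S.
Proof. by apply/subsetP => v; rewrite inE => /andP []. Qed.

Lemma isolated_in_nonadj (S : {set T}) u v :
  v \in isolated_in S -> u \in S -> ~~ adjacent u v.
Proof. by rewrite inE => /andP [_ /forall_inP]; apply. Qed.

Lemma card_isolated_in_lt (S : {set T}) w :
  w \in S -> w \notin isolated_in S -> #|isolated_in S| < #|S|.
Proof.
by move=> wS wB; apply/proper_card/properP; split; [exact: isolated_in_sub | exists w].
Qed.

Lemma closed_out_nb_common u v x : u != v -> ~~ adjacent u v ->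
  x \in closed_out_nb a u -> x \in closed_out_nb a v -> a u x && a v x.
Proof.
rewrite !inE /adjacent negb_or => uv /andP [nauv navu].
case/orP => [/eqP -> | aux]; case/orP => [/eqP exv | avx].
- by rewrite exv eqxx in uv.
- by rewrite avx in navu.
- by rewrite -exv aux in nauv.
- by rewrite aux avx.
Qed.

Lemma induced_no_isolatedP (S : {set T}) :
  reflect (forall v, v \in S -> exists2 u, u \in S & adjacent u v)
          (induced_no_isolated a S).
Proof.
apply: (iffP forall_inP) => hS v /hS.
  by case/exists_inP => u; exists u.
by case=> u uS huv; apply/exists_inP; exists u.
Qed.

Lemma induced_no_isolated_extension (S W : {set T}) :
  (forall v, v \in isolated_in S -> exists2 w, w \in W & adjacent w v) ->
  (forall w, w \in W -> exists2 u, u \in S & adjacent u w) ->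
  induced_no_isolated a (S :|: W).
Proof.
move=> hB hW; apply/induced_no_isolatedP => v; rewrite inE => /orP [vS | vW].
  case vB: (v \in isolated_in S).
    by have [w wW hw] := hB v vB; exists w; rewrite // inE wW orbT.
  move: vB; rewrite inE vS /= => /forall_inPn [u uS /negbNE huv].
  by exists u; rewrite // inE uS.
by have [u uS hu] := hW v vW; exists u; rewrite // inE uS.
Qed.

Lemma gamma_trk_le (f : {ffun T -> {set 'I_k}}) :
  is_TkRDF a f -> gamma_trk a k <= weight f.
Proof. exact: bigmin_le. Qed.

Lemma gamma_set_exists : exists S, is_gamma_set a S.
Proof.
suff : exists2 S, is_dominating a S & #|S| == gamma a.
  by case=> S hS hc; exists S; rewrite /is_gamma_set hS.
rewrite /gamma; apply: (big_ind (fun m => exists2 S, is_dominating a S & #|S| == m)).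
- exists [set: T]; rewrite ?cardsT //.
  apply/eqP/setP => v; rewrite !inE; apply/bigcupP; exists v; rewrite !inE ?eqxx //.
- by move=> m n hm hn; rewrite /minn; case: ifP.
- by move=> S hS; exists S.
Qed.

Lemma gamma_trk_le_extension (S W : {set T}) :
  0 < k -> is_dominating a S -> induced_no_isolated a (S :|: W) ->
  gamma_trk a k <= k * #|S| + #|W|.
Proof.
move=> k_gt0 hdom hSW.
pose f : {ffun T -> {set 'I_k}} :=
  [ffun v => if v \in S then [set: 'I_k]
             else if v \in W then [set Ordinal k_gt0] else set0].
(* Unqualified [support] would be the N-module notation from all_boot. *)
have supp_f : Defs.support f = S :|: W.
  apply/setP => v; rewrite !inE ffunE.
  case: (v \in S); first by apply/set0Pn; exists (Ordinal k_gt0).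
  by case: (v \in W); rewrite ?eqxx //; apply/set0Pn; exists (Ordinal k_gt0); rewrite inE.
have f_kRDF : is_kRDF a f.
  apply/forall_inP => v /eqP fv0.
  have : v \in closed_out_nbS a S by rewrite (eqP hdom) inE.
  case/bigcupP => s sS; rewrite !inE => /orP [/eqP vs | asv].
    by move: fv0; rewrite ffunE vs sS => /setP /(_ (Ordinal k_gt0)); rewrite !inE.
  apply/eqP/setP => c; rewrite inE; apply/bigcupP; exists s; rewrite ?inE //.
  by rewrite ffunE sS.
apply: leq_trans (gamma_trk_le (f := f) _) _; first by rewrite /is_TkRDF f_kRDF supp_f.
apply: (@leq_trans (\sum_v (k * (v \in S) + (v \in W)))).
  apply: leq_sum => v _; rewrite ffunE.
  case: (v \in S); first by rewrite cardsT card_ord muln1 leq_addr.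
  by case: (v \in W); rewrite ?cards1 ?cards0 muln0.
rewrite big_split -big_distrr /= -!sum1_card.
by rewrite [\sum_(v in S) 1]big_mkcond [\sum_(v in W) 1]big_mkcond.
Qed.





Section NoIsolatedVertex.
Hypothesis no_iso : no_isolated a.

Definition neighbour (v : T) : T := odflt v [pick u | adjacent u v].

Lemma adjacent_neighbour v : adjacent (neighbour v) v.
Proof.
rewrite /neighbour; case: pickP => [u -> // | none].
have := no_iso v; rewrite /isolated; apply: contraNT => _.
by apply/andP; split; apply/eqP/setP => u; rewrite !inE; have := none u;
  rewrite /adjacent; case: (a u v); case: (a v u).
Qed.

Lemma gamma_trk_le_isolated_cover (S X Y : {set T}) :
  0 < k -> is_dominating a S ->
  (forall v, v \in isolated_in S -> v \notin X -> exists2 y, y \in Y & adjacent y v) ->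
  (forall y, y \in Y -> exists2 u, u \in S & adjacent u y) ->
  gamma_trk a k <= k * #|S| + #|X| + #|Y|.
Proof.
move=> k_gt0 hdom hB hY.
pose W := neighbour @: (X :&: S) :|: Y.
apply: (@leq_trans (k * #|S| + #|W|)).
  apply: gamma_trk_le_extension k_gt0 hdom _.
  apply: induced_no_isolated_extension => [v vB | w].
    have vS := subsetP (isolated_in_sub S) v vB.
    case vX: (v \in X).
      by exists (neighbour v); rewrite ?adjacent_neighbour // inE imset_f // inE vX vS.
    by have [y yY hy] := hB v vB (negbT vX); exists y; rewrite // inE yY orbT.
  rewrite inE => /orP [/imsetP [x /setIP [_ xS] ->] | /hY //].
  by exists x; rewrite // adjacent_sym adjacent_neighbour.
rewrite -addnA leq_add2l (leq_trans (leq_card_setU _ _)) // leq_add2r.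
by rewrite (leq_trans (leq_imset_card _ _)) // subset_leq_card // subsetIl.
Qed.

Lemma gamma_trk_le_isolated S : 0 < k -> is_dominating a S ->
  gamma_trk a k <= k * #|S| + #|isolated_in S|.
Proof.
move=> k_gt0 hdom.
rewrite -[_ + _]addn0 -(cards0 T).
by apply: gamma_trk_le_isolated_cover => // [v -> // | y]; rewrite inE.
Qed.

Lemma gamma_trk_le_dominating S : 0 < k -> is_dominating a S ->
  gamma_trk a k <= k.+1 * #|S|.
Proof.
move=> k_gt0 /(gamma_trk_le_isolated k_gt0) /leq_trans; apply.
by rewrite mulSnr leq_add2l subset_leq_card // isolated_in_sub.
Qed.

Lemma gamma_trk_lt_overlap S u v x : 0 < k -> is_dominating a S ->
  u \in S -> v \in S -> u != v ->
  x \in closed_out_nb a u -> x \in closed_out_nb a v ->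
  gamma_trk a k < k.+1 * #|S|.
Proof.
move=> k_gt0 hdom uS vS uv xu xv.
have lt_S w : w \in S -> w \notin isolated_in S -> gamma_trk a k < k.+1 * #|S|.
  move=> wS wB; apply: leq_ltn_trans (gamma_trk_le_isolated k_gt0 hdom) _.
  by rewrite mulSnr ltn_add2l (card_isolated_in_lt wS wB).
have [uB | /(lt_S u uS) //] := boolP (u \in isolated_in S).
have [vB | /(lt_S v vS) //] := boolP (v \in isolated_in S).
have /andP [aux avx] := closed_out_nb_common uv (isolated_in_nonadj vB uS) xu xv.
pose X := isolated_in S :\ u :\ v.
have card_X : #|X|.+2 = #|isolated_in S|.
  rewrite (cardsD1 u (isolated_in S)) (cardsD1 v (isolated_in S :\ u)).
  by rewrite in_setD1 uB vB eq_sym uv.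
apply: leq_ltn_trans
  (gamma_trk_le_isolated_cover (X := X) (Y := [set x]) k_gt0 hdom _ _) _.
- move=> w wB; rewrite !in_setD1 wB !andbT negb_and !negbK.
  by case/orP => /eqP ->; exists x; rewrite ?inE // /adjacent ?aux ?avx orbT.
- by move=> y /set1P ->; exists u; rewrite // /adjacent aux.
rewrite cards1 -addnA addn1 mulSnr ltn_add2l.
by rewrite card_X subset_leq_card // isolated_in_sub.
Qed.

End NoIsolatedVertex.
End TotalRainbowDomination.

Theorem theorem2p1 (T : finType) (a : rel T) (k : nat) :
  0 < k -> loopless a -> no_isolated a ->
  gamma_trk a k <= k.+1 * gamma a /\
  (gamma_trk a k = k.+1 * gamma a ->
     forall S : {set T}, is_gamma_set a S -> is_packing a S).
Proof.
(* Loops do not affect the argument. *)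
move=> k_gt0 _ no_iso; split.
  have [S /andP [hdom /eqP <-]] := gamma_set_exists a.
  exact: gamma_trk_le_dominating.
move=> heq S /andP [hdom /eqP hc] u v uS vS uv.
rewrite disjoint_subset; apply/subsetP => x xu; rewrite inE; apply/negP => xv.
have := gamma_trk_lt_overlap no_iso k_gt0 hdom uS vS uv xu xv.
by rewrite heq hc ltnn.
Qed.
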